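(* Suppose a black-white array (BWA) stores $n$ values (state variable $\mathtt{total}=n$), where $n$ is $k$-trailed, and a new value is inserted. Then: (a) the result of the $k$ recursive merges is held in the white segment of rank $k$, and it contains all the values that were in segments of rank smaller than $k$, together with the new value; (b) once the insertion is completed, all segments of rank smaller than $k$ are inactive; (c) if $n$ is strongly $k$-trailed, then after the insertion all values in the BWA are held in the segment of rank $k$.
   Context: A black-white array (BWA) of size $N=2^K$ stores values from a totally ordered set. It has a white array $W[1..N-1]$ and a black array $B[1..N/2-1]$. For $i\ge 0$, the segment of rank $i$ of either array is the block of indices $[2^i,2^{i+1}-1]$. An integer state variable $\mathtt{total}$ records the number of stored values and is initially $0$. The segment of rank $i$ is active iff bit $i$ of $\mathtt{total}$ equals $1$ (bits counted from the least significant bit, which is bit $0$). Between operations, all stored values are held in the active white segments, each sorted ascending. Insert$(v)$: if the rank-0 segment is inactive, set $W[1]=v$; otherwise set $B[1]=v$ and perform $\mathrm{merge}(0)$. $\mathrm{merge}(i)$: merge the sorted white and black segments of rank $i$ by a standard two-way merge. If the rank-$(i+1)$ segment is inactive, the sorted result is written into the white segment of rank $i+1$. Otherwise it is written into the black segment of rank $i+1$, and then $\mathrm{merge}(i+1)$ is performed. When an insertion completes, $\mathtt{total}$ has increased by one. A nonnegative integer $n$ is $k$-trailed if its binary form is $[b_{m-1},\dots,b_{k+1},0,1,\dots,1]$, with exactly $k$ trailing ones followed by a $0$ at bit $k$. It is strongly $k$-trailed if moreover $b_i=0$ for all $i>k$, i.e. $n=2^k-1$. *)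

From mathcomp Require Import all_boot all_order.
Set Implicit Arguments. Unset Strict Implicit. Unset Printing Implicit Defensive.
Import Order.TTheory.
Local Open Scope order_scope.

Section BWA.
Variables (d : Order.disp_t) (T : orderType d).

(* A BWA state: white array white, black array black (indexed by nat; only the
   indices 1..N-1 resp. 1..N/2-1 are meaningful), and the counter total. *)
Record bwa := Bwa { white : nat -> T; black : nat -> T; tot : nat }.

Definition bit (n i : nat) : bool := odd (n %/ 2 ^ i).

Definition active (s : bwa) (i : nat) : bool := bit (tot s) i.

Definition seg (A : nat -> T) (i : nat) : seq T :=
  map A (iota (2 ^ i) (2 ^ i)).

Definition write_seg (A : nat -> T) (i : nat) (m : seq T) : nat -> T :=
  fun j => if (2 ^ i <= j < 2 ^ i.+1)%N then nth (A j) m (j - 2 ^ i) else A j.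

Definition set_cell (A : nat -> T) (j : nat) (v : T) : nat -> T :=
  fun j' => if j' == j then v else A j'.

Fixpoint merge_from (fuel i : nat) (s : bwa) : bwa :=
  match fuel with
  | 0 => s
  | fuel'.+1 =>
    let m := merge (<=%O : rel T) (seg (white s) i) (seg (black s) i) in
    if active s i.+1 then
      merge_from fuel' i.+1 (Bwa (white s) (write_seg (black s) i.+1 m) (tot s))
    else Bwa (write_seg (white s) i.+1 m) (black s) (tot s)
  end.

(* Insert(v) in a BWA of size N = 2^K (fuel K suffices for the recursion). *)
Definition insert (K : nat) (s : bwa) (v : T) : bwa :=
  let s' := if ~~ active s 0 then Bwa (set_cell (white s) 1 v) (black s) (tot s)
            else merge_from K 0 (Bwa (white s) (set_cell (black s) 1 v) (tot s)) in
  Bwa (white s') (black s') (tot s).+1.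

Definition stored (K : nat) (s : bwa) : seq T :=
  flatten [seq seg (white s) i | i <- iota 0 K & active s i].

End BWA.

Definition k_trailed (k n : nat) : Prop :=
  (forall i, (i < k)%N -> bit n i) /\ ~~ bit n k.

Definition strongly_k_trailed (k n : nat) : Prop :=
  k_trailed k n /\ (forall i, (k < i)%N -> ~~ bit n i).

From mathcomp Require Import all_boot all_order.

Set Implicit Arguments.
Unset Strict Implicit.
Unset Printing Implicit Defensive.

(* Adding 1 to a k-trailed counter clears its bits 0..k-1 and sets bit k.  So
   during the insertion, merge(i) finds the rank-(i+1) segment active exactly
   when i+1 < k: the cascade of merges runs through the ranks below k, each time
   absorbing one more white segment, and writes a run holding the new value and
   all of segments 0..k-1 into the white segment of rank k, which is the only
   rank below k+1 that is active afterwards. *)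

Lemma bit0E n : bit n 0 = odd n.
Proof. by rewrite /bit expn0 divn1. Qed.

Lemma bitSE n i : bit n i.+1 = bit n./2 i.
Proof. by rewrite /bit expnS divnMA divn2. Qed.

Lemma bit_expn_leq n i : bit n i -> 2 ^ i <= n.
Proof.
rewrite /bit => odd_q; have : 0 < n %/ 2 ^ i by case: (n %/ 2 ^ i) odd_q.
by rewrite divn_gt0 ?expn_gt0.
Qed.

Lemma bit_succ_trailed k n : k_trailed k n ->
  forall i, bit n.+1 i = if i < k then false else if i == k then true else bit n i.
Proof.
elim: k n => [|k IHk] n [ones_n zero_n] [|i] //=.
- by rewrite bit0E /= -bit0E (negbTE zero_n).
- by rewrite !bitSE -uphalfE uphalf_half -bit0E (negbTE zero_n).
- by rewrite bit0E /= -bit0E ones_n.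
rewrite !bitSE -uphalfE uphalf_half -bit0E ones_n // add1n ltnS eqSS.
apply: IHk; split; last by rewrite -bitSE.
by move=> j lt_jk; rewrite -bitSE ones_n.
Qed.

Section Segments.
Variables (d : Order.disp_t) (T : orderType d).
Implicit Types (A : nat -> T) (s : bwa T).

Lemma size_seg A i : size (seg A i) = 2 ^ i.
Proof. by rewrite size_map size_iota. Qed.

Lemma seg_write_seg A i m : size m = 2 ^ i -> seg (write_seg A i m) i = m.
Proof.
move=> size_m; apply: (@eq_from_nth _ (A 0)); first by rewrite size_seg size_m.
move=> j; rewrite size_seg => lt_j.
rewrite (nth_map 0) ?size_iota // nth_iota // /write_seg expnS mul2n -addnn.
rewrite leq_addr ltn_add2l lt_j addKn.
by apply: set_nth_default; rewrite size_m.
Qed.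

Lemma seg0_set_cell A v : seg (set_cell A 1 v) 0 = [:: v].
Proof. by rewrite /seg /= /set_cell eqxx. Qed.

Lemma perm_merge_from (v : T) k fuel i s :
  i < k -> k - i <= fuel ->
  (forall l, i < l < k -> active s l) -> ~~ active s k ->
  perm_eq (seg (black s) i) (v :: flatten [seq seg (white s) l | l <- iota 0 i]) ->
  perm_eq (seg (white (merge_from fuel i s)) k)
          (v :: flatten [seq seg (white s) l | l <- iota 0 k]).
Proof.
elim: fuel i s => [|fuel IHfuel] i s lt_ik fuel_ok ones_s zero_s black_i /=.
  by rewrite leqn0 subn_eq0 leqNgt lt_ik in fuel_ok.
set m := merge _ _ _.
have size_m : size m = 2 ^ i.+1.
  by rewrite size_merge size_cat !size_seg expnS mul2n addnn.
have perm_m : perm_eq m (v :: flatten [seq seg (white s) l | l <- iota 0 i.+1]).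
  rewrite /m perm_merge -addn1 iotaD map_cat flatten_cat /= cats0 add0n.
  by rewrite perm_catC -cat_cons perm_cat2r.
case: ifP => [active_i1 | /negbT inactive_i1].
- have lt_i1k : i.+1 < k.
    case: (ltngtP i.+1 k) => // [|eq_i1k]; first by rewrite ltnS leqNgt lt_ik.
    by move: active_i1; rewrite eq_i1k (negbTE zero_s).
  apply: IHfuel => //=; first by rewrite subnS -subn1 leq_subLR add1n.
    by move=> l /andP[lt_il lt_lk]; apply: ones_s; rewrite lt_lk andbT ltnW.
  by rewrite seg_write_seg.
- have -> : k = i.+1.
    case: (ltngtP i.+1 k) => // [lt_i1k|]; last by rewrite ltnS leqNgt lt_ik.
    by rewrite ones_s ?leqnn in inactive_i1.
  by rewrite /= seg_write_seg.
Qed.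

Lemma perm_seg_insert K s v k : k <= K -> k_trailed k (tot s) ->
  perm_eq (seg (white (insert K s v)) k)
          (v :: flatten [seq seg (white s) i | i <- iota 0 k]).
Proof.
rewrite /insert /active; case: k => [|k] le_kK [ones_s zero_s].
  by rewrite (negbTE zero_s) /= seg0_set_cell.
rewrite ones_s //=; apply: perm_merge_from => //=.
by move=> l /andP[_ lt_lk]; rewrite /active ones_s.
Qed.

Lemma stored_low_ranks K s k : k <= K -> (forall i, i < K -> active s i = (i < k)) ->
  stored K s = flatten [seq seg (white s) i | i <- iota 0 k].
Proof.
move=> le_kK active_s; rewrite /stored -(filter_iota_ltn 0 le_kK).
by congr (flatten (map _ _)); apply: eq_in_filter => i; rewrite mem_iota => /active_s.
Qed.

Lemma stored_single_rank K s k : k < K -> (forall i, i < K -> active s i = (i == k)) ->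
  stored K s = seg (white s) k.
Proof.
move=> lt_kK active_s; rewrite /stored.
rewrite (@eq_in_filter _ _ (pred1 k)) ?filter_pred1_uniq ?iota_uniq ?mem_iota //=.
  by rewrite cats0.
by move=> i; rewrite mem_iota => /active_s.
Qed.

End Segments.

Theorem mainTheorem2 (d : Order.disp_t) (T : orderType d) (K : nat)
    (s : bwa T) (v : T) (n k : nat) :
  tot s = n ->
  (n.+1 < 2 ^ K)%N ->
  k_trailed k n ->
  let s' := insert K s v in
  (* (a) *)
  perm_eq (seg (white s') k) (v :: flatten [seq seg (white s) i | i <- iota 0 k])
  (* (b) *)
  /\ (forall i, (i < k)%N -> ~~ active s' i)
  (* (c) *)
  /\ (strongly_k_trailed k n ->
        stored K s' = seg (white s') k /\ perm_eq (stored K s') (v :: stored K s)).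
Proof.
move=> tot_s lt_nK trailed s'.
have bit_succ := bit_succ_trailed trailed; case: trailed => ones_n zero_n.
have active_s' i : active s' i = if i < k then false else if i == k then true else bit n i.
  by rewrite /active /= tot_s bit_succ.
have lt_kK : k < K.
  rewrite -(ltn_exp2l _ _ (ltnSn 1)); apply: leq_ltn_trans lt_nK.
  by apply: bit_expn_leq; rewrite bit_succ ltnn eqxx.
have white_k : perm_eq (seg (white s') k) (v :: flatten [seq seg (white s) i | i <- iota 0 k]).
  by apply: perm_seg_insert (ltnW lt_kK) _; rewrite tot_s.
split=> //; split=> [i lt_ik | [_ zeros_n]]; first by rewrite active_s' lt_ik.
have stored_s' : stored K s' = seg (white s') k.
  apply: stored_single_rank => // i _; rewrite active_s'.
  by case: ltngtP => // lt_ki; rewrite (negbTE (zeros_n i lt_ki)).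
split=> //; rewrite stored_s' (stored_low_ranks (s := s) (ltnW lt_kK)) // => i _.
rewrite /active tot_s; case: ltngtP => [/ones_n | /zeros_n /negbTE | ->] //.
exact: negbTE.
Qed.
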